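(* Consider a nonrelativistic quantum system with one degree of freedom and Hamiltonian $$H(\hat q,\hat p)=\frac{\hat p^2}{2m}+\tfrac12 c(\hat q\hat p+\hat p\hat q)+\xi_p\hat p+U(\hat q),$$ with $m>0$, $c,\xi_p\in\mathbb R$ and $U$ a real function. Suppose the system is in a pure state with wave function $\psi(q,t)=\Omega(q,t)e^{iS(q,t)/\hbar}$, $\Omega=|\psi|$. Let $\Delta q^2$ and $\Delta p^2$ be the variances of position and momentum in this state, and let $\mathrm{Cov}(\partial_qS,\partial_qS)=\langle(\partial_qS)^2\rangle-\langle\partial_qS\rangle^2$ with means taken with respect to $\Omega^2dq$. Then $$\Delta p^2\Delta q^2-\mathrm{Cov}(\partial_qS,\partial_qS)\,\Delta q^2-\frac{\hbar^2}{4}\ \ge\ 0 .$$ Moreover, this inequality is stronger than the Robertson–Schrödinger uncertainty relation $$\Delta q^2\Delta p^2-[\mathrm{Cov}(q,p)]^2-\frac{\hbar^2}{4}\ge 0,$$ in the sense that it is a sufficient but not necessary condition for it.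
   Context: The amplitude $\Omega$ is assumed continuous and twice continuously differentiable, with $\int_{\mathbb R}\Omega^2dq=1$ and $\Omega\to0$ as $|q|\to\infty$. Variances are $\Delta q^2=\langle\psi|\hat q^2|\psi\rangle-\langle\psi|\hat q|\psi\rangle^2$, $\Delta p^2=\langle\psi|\hat p^2|\psi\rangle-\langle\psi|\hat p|\psi\rangle^2$, and the symmetrized position–momentum covariance is $\mathrm{Cov}(q,p)=\tfrac12\langle\psi|\hat q\hat p+\hat p\hat q|\psi\rangle-\langle\psi|\hat q|\psi\rangle\langle\psi|\hat p|\psi\rangle$. *)

From Stdlib Require Import Reals.
From Coquelicot Require Import Coquelicot.
Open Scope R_scope.

Definition Iall (f : R -> R) : R :=
  RInt_gen f (Rbar_locally m_infty) (Rbar_locally p_infty).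
Definition ex_Iall (f : R -> R) : Prop :=
  ex_RInt_gen f (Rbar_locally m_infty) (Rbar_locally p_infty).

(* The state psi(q) = Om(q) * exp(i S(q) / hbar), Om = |psi| (fixed time).
   All expectation values below are the (real) values of <psi| A |psi>,
   written out in terms of Om and S. *)

Definition mean_q (Om : R -> R) : R := Iall (fun q => q * Om q ^ 2).
Definition mean_q2 (Om : R -> R) : R := Iall (fun q => q ^ 2 * Om q ^ 2).
Definition var_q (Om : R -> R) : R := mean_q2 Om - mean_q Om ^ 2.

(* <psi| p |psi> = Re \int conj(psi) (-i hbar psi') dq = \int Om^2 S' dq *)
Definition mean_p (Om S : R -> R) : R := Iall (fun q => Om q ^ 2 * Derive S q).
(* <psi| p^2 |psi> = Re \int conj(psi) (-hbar^2 psi'') dq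
                   = \int ( -hbar^2 Om Om'' + Om^2 S'^2 ) dq *)
Definition mean_p2 (hbar : R) (Om S : R -> R) : R :=
  Iall (fun q => - hbar ^ 2 * Om q * Derive_n Om 2 q + Om q ^ 2 * Derive S q ^ 2).
Definition var_p (hbar : R) (Om S : R -> R) : R :=
  mean_p2 hbar Om S - mean_p Om S ^ 2.

(* 1/2 <psi| q p + p q |psi> = Re of the same = \int q Om^2 S' dq *)
Definition mean_qp_sym (Om S : R -> R) : R :=
  Iall (fun q => q * Om q ^ 2 * Derive S q).
Definition cov_qp (Om S : R -> R) : R :=
  mean_qp_sym Om S - mean_q Om * mean_p Om S.

Definition cov_SS (Om S : R -> R) : R :=
  Iall (fun q => Om q ^ 2 * Derive S q ^ 2)
  - Iall (fun q => Om q ^ 2 * Derive S q) ^ 2.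

Definition admissible (Om S : R -> R) : Prop :=
  (forall q, 0 <= Om q) /\
  (forall q, ex_derive Om q) /\
  (forall q, ex_derive (Derive Om) q) /\
  (forall q, continuous (Derive_n Om 2) q) /\
  (forall q, ex_derive S q) /\
  is_RInt_gen (fun q => Om q ^ 2) (Rbar_locally m_infty) (Rbar_locally p_infty) 1 /\
  filterlim Om (Rbar_locally m_infty) (locally 0) /\
  filterlim Om (Rbar_locally p_infty) (locally 0) /\
  ex_Iall (fun q => q * Om q ^ 2) /\
  ex_Iall (fun q => q ^ 2 * Om q ^ 2) /\
  ex_Iall (fun q => Om q * Derive_n Om 2 q) /\
  ex_Iall (fun q => Om q ^ 2 * Derive S q) /\
  ex_Iall (fun q => Om q ^ 2 * Derive S q ^ 2) /\
  ex_Iall (fun q => q * Om q ^ 2 * Derive S q).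

Definition new_lhs (hbar : R) (Om S : R -> R) : R :=
  var_p hbar Om S * var_q Om - cov_SS Om S * var_q Om - hbar ^ 2 / 4.
Definition rs_lhs (hbar : R) (Om S : R -> R) : R :=
  var_q Om * var_p hbar Om S - cov_qp Om S ^ 2 - hbar ^ 2 / 4.

(* Write mu for the mean position and K = \int Om Om''.  Since <p^2> = - hbar^2 K + \int Om^2 S'^2,
   the left-hand side of the new relation is hbar^2 (- K Var q - 1/4), so its nonnegativity is
   the Heisenberg-Weyl inequality 1/4 <= - K Var q: the discriminant condition for
   t |-> t^2 Var q - t - K >= 0.  Put h = 2 t (x - mu) Om^2 + (Om^2)'; then
   h' + k = 2 (t (x - mu) Om + Om')^2 >= 0 for a k integrating to 2 (t^2 Var q - t - K), so it
   suffices that h cannot increase across the line.  Nothing forces h to vanish at infinity, but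
   a net increase would keep (Om^2)' = h - 2 t (x - mu) Om^2 above a positive constant minus an
   integrable function on a half-line, contradicting Om -> 0.

   The two left-hand sides differ by Var q Cov(S', S') - Cov(q, p)^2, which is nonnegative by the
   Cauchy-Schwarz inequality for the weight Om^2.  It is positive for Om = sqrt (2 / PI) / (1 + q^2)
   and S = atan, whose moments follow from the reduction formula for \int (1 + x^2)^(-n). *)

From Coquelicot Require Import Coquelicot.
From Stdlib Require Import Reals Lra Lia Classical.
Open Scope R_scope.

(** * Improper integrals over the real line *)

Notation is_Iall f l := (is_RInt_gen f (Rbar_locally m_infty) (Rbar_locally p_infty) l).

Lemma Iall_correct (f : R -> R) : ex_Iall f -> is_Iall f (Iall f).
Proof. apply (RInt_gen_correct (V := R_CompleteNormedModule)). Qed.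

Lemma Iall_unique (f : R -> R) (l : R) : is_Iall f l -> Iall f = l.
Proof. apply (is_RInt_gen_unique (V := R_CompleteNormedModule)). Qed.

Lemma is_Iall_ext (f g : R -> R) (l l' : R) :
  (forall x, f x = g x) -> l = l' -> is_Iall f l -> is_Iall g l'.
Proof.
  intros Hfg <- H. apply (is_RInt_gen_ext f); [|exact H].
  apply filter_forall. intros; apply Hfg.
Qed.

Lemma is_Iall_plus (f g : R -> R) (lf lg : R) :
  is_Iall f lf -> is_Iall g lg -> is_Iall (fun x => f x + g x) (lf + lg).
Proof. apply (is_RInt_gen_plus (V := R_NormedModule)). Qed.

Lemma is_Iall_minus (f g : R -> R) (lf lg : R) :
  is_Iall f lf -> is_Iall g lg -> is_Iall (fun x => f x - g x) (lf - lg).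
Proof. apply (is_RInt_gen_minus (V := R_NormedModule)). Qed.

Lemma is_Iall_scal (f : R -> R) (c l : R) :
  is_Iall f l -> is_Iall (fun x => c * f x) (c * l).
Proof. apply (is_RInt_gen_scal (V := R_NormedModule)). Qed.

Lemma is_Iall_approx (f : R -> R) (l eps : R) : is_Iall f l -> 0 < eps ->
  exists M, forall a b, a < -M -> M < b ->
    exists y, is_RInt f a b y /\ Rabs (y - l) < eps.
Proof.
  intros Hf Heps.
  destruct (Hf (ball l eps) (locally_ball l (mkposreal eps Heps)))
    as [P Q [M1 HP] [M2 HQ] HPQ].
  exists (Rmax (Rabs M1) (Rabs M2)). intros a b Ha Hb.
  pose proof (Rmax_l (Rabs M1) (Rabs M2)). pose proof (Rmax_r (Rabs M1) (Rabs M2)).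
  pose proof (Rle_abs M2). pose proof (Rle_abs (- M1)). rewrite Rabs_Ropp in *.
  destruct (HPQ a b) as [y [Hy Hyl]]; [apply HP; lra | apply HQ; lra |].
  exists y. split; [exact Hy | exact Hyl].
Qed.

Lemma is_Iall_ge_0 (f : R -> R) (l : R) : (forall x, 0 <= f x) -> is_Iall f l -> 0 <= l.
Proof.
  intros Hf H. apply Rnot_lt_le. intro Hl.
  destruct (is_Iall_approx f l (- l) H ltac:(lra)) as [M HM].
  destruct (HM (- Rabs M - 1) (Rabs M + 1)) as [y [Hy Hyl]];
    [pose proof (Rle_abs M); lra | pose proof (Rle_abs M); lra |].
  assert (0 <= y).
  { rewrite <- (is_RInt_unique _ _ _ _ Hy).
    apply RInt_ge_0; [pose proof (Rabs_pos M); lra | eexists; exact Hy | intros; apply Hf]. }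
  apply Rabs_def2 in Hyl. lra.
Qed.

Lemma RInt_le_is_Iall (f : R -> R) (l a b : R) :
  (forall x, continuous f x) -> (forall x, 0 <= f x) -> is_Iall f l ->
  a <= b -> RInt f a b <= l.
Proof.
  intros Hc Hf H Hab. apply Rnot_lt_le. intro Hlt.
  assert (Hex : forall u v, ex_RInt f u v).
  { intros. apply (ex_RInt_continuous (V := R_CompleteNormedModule)). intros; apply Hc. }
  destruct (is_Iall_approx f l ((RInt f a b - l) / 2) H ltac:(lra)) as [M HM].
  set (a' := Rmin a (- M) - 1). set (b' := Rmax b M + 1).
  assert (a' < - M /\ a' <= a) as [Ha' Haa'].
  { unfold a'. pose proof (Rmin_l a (- M)). pose proof (Rmin_r a (- M)). lra. }
  assert (M < b' /\ b <= b') as [Hb' Hbb'].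
  { unfold b'. pose proof (Rmax_l b M). pose proof (Rmax_r b M). lra. }
  destruct (HM a' b' Ha' Hb') as [y [Hy Hyl]].
  assert (RInt f a b <= y).
  { rewrite <- (is_RInt_unique _ _ _ _ Hy), <- (RInt_Chasles f a' a b'), <- (RInt_Chasles f a b b')
      by apply Hex.
    assert (0 <= RInt f a' a) by (apply RInt_ge_0; auto).
    assert (0 <= RInt f b b') by (apply RInt_ge_0; auto).
    simpl. unfold plus; simpl. lra. }
  apply Rabs_def2 in Hyl. lra.
Qed.

Lemma is_Iall_derive (F f : R -> R) (la lb : R) :
  (forall x, is_derive F x (f x)) -> (forall x, continuous f x) ->
  filterlim F (Rbar_locally m_infty) (locally la) ->
  filterlim F (Rbar_locally p_infty) (locally lb) ->
  is_Iall f (lb - la).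
Proof.
  intros HF Hf Hla Hlb.
  assert (HD : forall x, Derive F x = f x) by (intros; apply is_derive_unique, HF).
  apply (is_Iall_ext (Derive F) f _ _ HD eq_refl).
  apply is_RInt_gen_Derive; [| | exact Hla | exact Hlb]; apply filter_forall; intros _ x _.
  - eexists; apply HF.
  - apply (continuous_ext f); [intros; symmetry; apply HD | apply Hf].
Qed.

(** * Weighted covariances *)

Lemma is_Iall_centered_product (G phi psi : R -> R) (a b c : R) :
  is_Iall G 1 -> is_Iall (fun x => phi x * G x) a -> is_Iall (fun x => psi x * G x) b ->
  is_Iall (fun x => phi x * psi x * G x) c ->
  is_Iall (fun x => (phi x - a) * (psi x - b) * G x) (c - a * b).
Proof.
  intros HG Ha Hb Hc.
  apply (is_Iall_ext
    (fun x => phi x * psi x * G x - b * (phi x * G x) - a * (psi x * G x) + a * b * G x)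
    _ (c - b * a - a * b + a * b * 1)); [intros; ring | ring |].
  apply is_Iall_plus; [apply is_Iall_minus; [apply is_Iall_minus |] |].
  - exact Hc.
  - apply is_Iall_scal, Ha.
  - apply is_Iall_scal, Hb.
  - apply is_Iall_scal, HG.
Qed.

Lemma quadratic_nonneg_discriminant (V C W : R) :
  0 <= V -> (forall s, 0 <= s ^ 2 * V + 2 * s * C + W) -> C ^ 2 <= V * W.
Proof.
  intros HV Hq. destruct (Rle_lt_or_eq_dec 0 V HV) as [HVpos | <-].
  - specialize (Hq (- C / V)).
    replace ((- C / V) ^ 2 * V + 2 * (- C / V) * C + W) with (W - C ^ 2 / V) in Hq
      by (field; lra).
    replace (C ^ 2) with (V * (C ^ 2 / V)) by (field; lra).
    apply Rmult_le_compat_l; lra.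
  - destruct (Req_dec C 0) as [-> | HC]; [lra |].
    specialize (Hq (- (Rabs W + 1) / (2 * C))).
    replace ((- (Rabs W + 1) / (2 * C)) ^ 2 * 0 + 2 * (- (Rabs W + 1) / (2 * C)) * C + W)
      with (W - (Rabs W + 1)) in Hq by (field; exact HC).
    pose proof (Rle_abs W). lra.
Qed.

Lemma covariance_cauchy_schwarz (G phi psi : R -> R) (a b cpp css cps : R) :
  (forall x, 0 <= G x) -> is_Iall G 1 ->
  is_Iall (fun x => phi x * G x) a -> is_Iall (fun x => psi x * G x) b ->
  is_Iall (fun x => phi x ^ 2 * G x) cpp -> is_Iall (fun x => psi x ^ 2 * G x) css ->
  is_Iall (fun x => phi x * psi x * G x) cps ->
  (cps - a * b) ^ 2 <= (cpp - a ^ 2) * (css - b ^ 2).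
Proof.
  intros HG0 HG Ha Hb Hpp Hss Hps.
  assert (Hvar : forall f m v, is_Iall (fun x => f x * G x) m ->
             is_Iall (fun x => f x ^ 2 * G x) v ->
             is_Iall (fun x => (f x - m) * (f x - m) * G x) (v - m ^ 2)).
  { intros f m v Hm Hv. replace (v - m ^ 2) with (v - m * m) by ring.
    apply is_Iall_centered_product; [exact HG | exact Hm | exact Hm |].
    apply (is_Iall_ext (fun x => f x ^ 2 * G x) _ v); [intros; ring | reflexivity | exact Hv]. }
  pose proof (Hvar phi a cpp Ha Hpp) as Vphi.
  pose proof (Hvar psi b css Hb Hss) as Vpsi.
  pose proof (is_Iall_centered_product G phi psi a b cps HG Ha Hb Hps) as Cov.
  apply quadratic_nonneg_discriminant.
  - refine (is_Iall_ge_0 _ _ _ Vphi). intros x.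
    apply Rmult_le_pos; [apply Rle_0_sqr | apply HG0].
  - intros s. apply (is_Iall_ge_0 (fun x => (s * (phi x - a) + (psi x - b)) ^ 2 * G x)).
    { intros x. apply Rmult_le_pos; [apply pow2_ge_0 | apply HG0]. }
    apply (is_Iall_ext (fun x => s ^ 2 * ((phi x - a) * (phi x - a) * G x)
       + (2 * s * ((phi x - a) * (psi x - b) * G x) + (psi x - b) * (psi x - b) * G x))
       _ (s ^ 2 * (cpp - a ^ 2) + (2 * s * (cps - a * b) + (css - b ^ 2))));
      [intros; ring | ring |].
    apply is_Iall_plus; [apply is_Iall_scal, Vphi |].
    apply is_Iall_plus; [apply is_Iall_scal, Cov | exact Vpsi].
Qed.

(** * The Heisenberg-Weyl inequality *)

Lemma RInt_derive_plus_ge (G G' f : R -> R) (eps u v : R) :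
  u <= v -> (forall x, is_derive G x (G' x)) -> (forall x, continuous G' x) ->
  (forall x, continuous f x) -> (forall x, u < x < v -> eps <= G' x + f x) ->
  eps * (v - u) <= G v - G u + RInt f u v.
Proof.
  intros Huv HG HG' Hf Hlow.
  assert (Hint : is_RInt (fun x => G' x + f x) u v (G v - G u + RInt f u v)).
  { apply (is_RInt_plus (V := R_NormedModule)).
    - apply (is_RInt_derive (V := R_CompleteNormedModule)); intros; auto.
    - apply (RInt_correct (V := R_CompleteNormedModule)),
        (ex_RInt_continuous (V := R_CompleteNormedModule)); intros; auto. }
  rewrite <- (is_RInt_unique _ _ _ _ Hint), Rmult_comm,
    <- (RInt_const (V := R_CompleteNormedModule)).
  apply RInt_le; [exact Huv | apply ex_RInt_const | eexists; exact Hint | exact Hlow].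
Qed.

Section Drift.

Variables (G G' f : R -> R) (Lf eps : R).
Hypotheses (G_derive : forall x, is_derive G x (G' x)) (G'_continuous : forall x, continuous G' x)
  (f_continuous : forall x, continuous f x) (f_ge_0 : forall x, 0 <= f x)
  (f_integral : is_Iall f Lf) (eps_pos : 0 < eps).

Lemma not_eventually_bounded_p (u : R) :
  (forall x, u < x -> eps <= G' x + f x) ->
  forall B, ~ Rbar_locally p_infty (fun x => G x <= B).
Proof.
  intros Hlow B [N HN].
  set (d := Rabs (B - G u + Lf) / eps).
  assert (Hd : eps * d = Rabs (B - G u + Lf)) by (unfold d; field; lra).
  assert (Hd0 : 0 <= d) by (unfold d; apply Rdiv_le_0_compat; [apply Rabs_pos | exact eps_pos]).
  set (X := Rmax u N + 1 + d).
  assert (u + 1 + d <= X /\ N < X) as [HuX HNX].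
  { unfold X. pose proof (Rmax_l u N). pose proof (Rmax_r u N). lra. }
  pose proof (RInt_derive_plus_ge G G' f eps u X ltac:(lra) G_derive G'_continuous f_continuous
    ltac:(intros x Hx; apply Hlow; lra)).
  pose proof (RInt_le_is_Iall f Lf u X f_continuous f_ge_0 f_integral ltac:(lra)).
  assert (eps * (1 + d) <= eps * (X - u)) by (apply Rmult_le_compat_l; lra).
  pose proof (Rle_abs (B - G u + Lf)).
  pose proof (HN X HNX). lra.
Qed.

Lemma not_eventually_bounded_m (v : R) :
  (forall x, x < v -> eps <= f x - G' x) ->
  forall B, ~ Rbar_locally m_infty (fun x => G x <= B).
Proof.
  intros Hlow B [N HN].
  set (d := Rabs (B - G v + Lf) / eps).
  assert (Hd : eps * d = Rabs (B - G v + Lf)) by (unfold d; field; lra).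
  assert (Hd0 : 0 <= d) by (unfold d; apply Rdiv_le_0_compat; [apply Rabs_pos | exact eps_pos]).
  set (X := Rmin v N - 1 - d).
  assert (X <= v - 1 - d /\ X < N) as [HXv HXN].
  { unfold X. pose proof (Rmin_l v N). pose proof (Rmin_r v N). lra. }
  pose proof (RInt_derive_plus_ge (fun x => - G x) (fun x => - G' x) f eps X v ltac:(lra)
    (fun x => is_derive_opp G x (G' x) (G_derive x))
    (fun x => continuous_opp G' x (G'_continuous x)) f_continuous
    ltac:(intros x Hx; specialize (Hlow x ltac:(lra)); lra)).
  pose proof (RInt_le_is_Iall f Lf X v f_continuous f_ge_0 f_integral ltac:(lra)).
  assert (eps * (1 + d) <= eps * (v - X)) by (apply Rmult_le_compat_l; lra).
  pose proof (Rle_abs (B - G v + Lf)).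
  pose proof (HN X HXN). lra.
Qed.

End Drift.

Lemma eventually_le_of_lim (F : (R -> Prop) -> Prop) (g : R -> R) (l B : R) :
  filterlim g F (locally l) -> l < B -> F (fun x => g x <= B).
Proof.
  intros Hg HlB. apply (Hg (fun y => y <= B)).
  exists (mkposreal (B - l) ltac:(lra)). intros y Hy.
  change (Rabs (y - l) < B - l) in Hy. apply Rabs_def2 in Hy. lra.
Qed.

(* A weak form of [h (+oo) - h (-oo) <= 0], which is all that an integration by parts
   needs of its boundary term. *)
Definition no_net_increase (h : R -> R) : Prop :=
  forall eps M, 0 < eps -> exists a b, a < - M /\ M < b /\ h b - h a < eps.

Lemma no_net_increase_drift (G G' c f : R -> R) (Lf : R) :
  (forall x, is_derive G x (G' x)) -> (forall x, continuous G' x) ->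
  (forall x, continuous f x) -> (forall x, 0 <= f x) -> is_Iall f Lf ->
  (forall x, Rabs (c x * G x) <= f x) ->
  filterlim G (Rbar_locally m_infty) (locally 0) ->
  filterlim G (Rbar_locally p_infty) (locally 0) ->
  no_net_increase (fun x => c x * G x + G' x).
Proof.
  intros HG HG' Hf Hf0 HLf Hc Hlim_m Hlim_p eps M Heps.
  assert (Hcf : forall x, - f x <= c x * G x <= f x).
  { intros x. pose proof (Hc x). pose proof (Rle_abs (c x * G x)).
    pose proof (Rle_abs (- (c x * G x))). rewrite Rabs_Ropp in *. lra. }
  assert (exists b, M < b /\ c b * G b + G' b < eps / 2) as [b [Hb Hhb]].
  { apply NNPP. intros Hno.
    apply (not_eventually_bounded_p G G' f Lf (eps / 2) HG HG' Hf Hf0 HLf ltac:(lra) M) with 1;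
      [| exact (eventually_le_of_lim _ G 0 1 Hlim_p Rlt_0_1)].
    intros x Hx. apply Rnot_lt_le. intros Hlt. apply Hno. exists x.
    pose proof (Hcf x). split; [exact Hx | lra]. }
  assert (exists a, a < - M /\ - (eps / 2) < c a * G a + G' a) as [a [Ha Hha]].
  { apply NNPP. intros Hno.
    apply (not_eventually_bounded_m G G' f Lf (eps / 2) HG HG' Hf Hf0 HLf ltac:(lra) (- M)) with 1;
      [| exact (eventually_le_of_lim _ G 0 1 Hlim_m Rlt_0_1)].
    intros x Hx. apply Rnot_lt_le. intros Hlt. apply Hno. exists x.
    pose proof (Hcf x). split; [exact Hx | lra]. }
  exists a, b. repeat split; [exact Ha | exact Hb | lra].
Qed.

Lemma is_Iall_ge_0_of_derive (h h' k : R -> R) (L : R) :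
  (forall x, is_derive h x (h' x)) -> (forall x, continuous h' x) ->
  (forall x, 0 <= h' x + k x) -> is_Iall k L -> no_net_increase h -> 0 <= L.
Proof.
  intros Hh Hh' Hpos Hk Hflux. apply Rnot_lt_le. intros HL.
  destruct (is_Iall_approx k L (- L / 2) Hk ltac:(lra)) as [M HM].
  destruct (Hflux (- L / 2) (Rabs M) ltac:(lra)) as [a [b [Ha [Hb Hab]]]].
  pose proof (Rle_abs M). pose proof (Rabs_pos M).
  destruct (HM a b ltac:(lra) ltac:(lra)) as [y [Hy Hyl]].
  assert (Hint : is_RInt (fun x => h' x + k x) a b (h b - h a + y)).
  { apply (is_RInt_plus (V := R_NormedModule)); [| exact Hy].
    apply (is_RInt_derive (V := R_CompleteNormedModule)); intros; auto. }
  assert (0 <= h b - h a + y).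
  { rewrite <- (is_RInt_unique _ _ _ _ Hint).
    apply RInt_ge_0; [lra | eexists; exact Hint | intros; apply Hpos]. }
  apply Rabs_def2 in Hyl. lra.
Qed.

Lemma Rabs_mult_le_sqr_plus_1 (c y w : R) :
  0 <= w -> Rabs (c * y * w) <= Rabs c * ((y ^ 2 + 1) * w).
Proof.
  intros Hw. rewrite !Rabs_mult, (Rabs_pos_eq w Hw).
  assert (Hy : Rabs y <= y ^ 2 + 1).
  { rewrite <- (pow2_abs y). pose proof (pow2_ge_0 (Rabs y - 1)). pose proof (Rabs_pos y). nra. }
  rewrite Rmult_assoc. apply Rmult_le_compat_l; [apply Rabs_pos |].
  apply Rmult_le_compat_r; assumption.
Qed.

Section HeisenbergWeyl.

Variables (Om : R -> R) (mu N V K : R).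
Hypotheses (Om_derivable : forall x, ex_derive Om x)
  (Om'_derivable : forall x, ex_derive (Derive Om) x)
  (Om''_continuous : forall x, continuous (Derive (Derive Om)) x)
  (Om_lim_m : filterlim Om (Rbar_locally m_infty) (locally 0))
  (Om_lim_p : filterlim Om (Rbar_locally p_infty) (locally 0))
  (Om_norm : is_Iall (fun x => Om x ^ 2) N)
  (Om_spread : is_Iall (fun x => (x - mu) ^ 2 * Om x ^ 2) V)
  (Om_kinetic : is_Iall (fun x => Om x * Derive (Derive Om) x) K).

Let Om_sqr_lim (F : (R -> Prop) -> Prop) :
  filterlim Om F (locally 0) -> filterlim (fun x => Om x ^ 2) F (locally 0).
Proof.
  intros HF.
  assert (Hsqr : continuous (fun y : R => y ^ 2) 0).
  { apply (ex_derive_continuous (V := R_NormedModule)). auto_derive. exact I. }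
  pose proof (filterlim_comp _ _ _ Om (fun y => y ^ 2) F (locally 0) _ HF Hsqr) as Hlim.
  cbv beta in Hlim. rewrite pow_i in Hlim by lia. exact Hlim.
Qed.

Lemma no_net_increase_boundary_term (t : R) :
  no_net_increase (fun x => 2 * t * (x - mu) * Om x ^ 2 + 2 * Om x * Derive Om x).
Proof.
  apply (no_net_increase_drift (fun x => Om x ^ 2) (fun x => 2 * Om x * Derive Om x)
    (fun x => 2 * t * (x - mu)) (fun x => Rabs (2 * t) * (((x - mu) ^ 2 + 1) * Om x ^ 2))
    (Rabs (2 * t) * (V + N))).
  - intros x. auto_derive; [auto |]. change (fun y => Om y) with Om. ring.
  - intros x. apply (ex_derive_continuous (V := R_NormedModule)). auto_derive. auto.
  - intros x. apply (ex_derive_continuous (V := R_NormedModule)). auto_derive. auto.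
  - intros x. apply Rmult_le_pos; [apply Rabs_pos |].
    apply Rmult_le_pos; [pose proof (pow2_ge_0 (x - mu)); lra | apply pow2_ge_0].
  - apply is_Iall_scal.
    apply (is_Iall_ext (fun x => (x - mu) ^ 2 * Om x ^ 2 + Om x ^ 2) _ (V + N));
      [intros; ring | reflexivity | apply is_Iall_plus; assumption].
  - intros x. apply Rabs_mult_le_sqr_plus_1, pow2_ge_0.
  - apply Om_sqr_lim, Om_lim_m.
  - apply Om_sqr_lim, Om_lim_p.
Qed.

Lemma heisenberg_quadratic_nonneg (t : R) : 0 <= t ^ 2 * V - t * N - K.
Proof.
  set (h' x := 2 * t * Om x ^ 2 + 4 * t * (x - mu) * Om x * Derive Om x
    + 2 * Derive Om x ^ 2 + 2 * Om x * Derive (Derive Om) x).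
  set (k x := 2 * (t ^ 2 * ((x - mu) ^ 2 * Om x ^ 2) - t * Om x ^ 2
    - Om x * Derive (Derive Om) x)).
  assert (Hk : is_Iall k (2 * (t ^ 2 * V - t * N - K))).
  { apply is_Iall_scal, is_Iall_minus; [apply is_Iall_minus |].
    - apply is_Iall_scal, Om_spread.
    - apply is_Iall_scal, Om_norm.
    - exact Om_kinetic. }
  enough (0 <= 2 * (t ^ 2 * V - t * N - K)) by lra.
  apply (is_Iall_ge_0_of_derive (fun x => 2 * t * (x - mu) * Om x ^ 2 + 2 * Om x * Derive Om x)
    h' k); [| | | exact Hk | exact (no_net_increase_boundary_term t)]; intros x.
  - auto_derive; [auto |].
    change (fun y => Om y) with Om. change (fun y => Derive Om y) with (Derive Om).
    unfold h'. ring.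
  - unfold h'.
    apply (continuous_plus (fun x => 2 * t * Om x ^ 2 + 4 * t * (x - mu) * Om x * Derive Om x
      + 2 * Derive Om x ^ 2) (fun x => 2 * Om x * Derive (Derive Om) x)).
    + apply (ex_derive_continuous (V := R_NormedModule)). auto_derive. auto.
    + apply (continuous_mult (fun x => 2 * Om x)); [| apply Om''_continuous].
      apply (ex_derive_continuous (V := R_NormedModule)). auto_derive. auto.
  - replace (h' x + k x) with (2 * (t * (x - mu) * Om x + Derive Om x) ^ 2) by (unfold h', k; ring).
    pose proof (pow2_ge_0 (t * (x - mu) * Om x + Derive Om x)). lra.
Qed.

Lemma heisenberg_weyl : N ^ 2 / 4 <= - K * V.
Proof.
  replace (N ^ 2 / 4) with ((- N / 2) ^ 2) by field.
  replace (- K * V) with (V * - K) by ring.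
  apply quadratic_nonneg_discriminant.
  - refine (is_Iall_ge_0 _ _ _ Om_spread). intros x.
    apply Rmult_le_pos; apply pow2_ge_0.
  - intros s. replace (s ^ 2 * V + 2 * s * (- N / 2) + - K) with (s ^ 2 * V - s * N - K) by field.
    apply heisenberg_quadratic_nonneg.
Qed.

End HeisenbergWeyl.

Lemma uncertainty_relations (hbar : R) (Om S : R -> R) : admissible Om S ->
  0 <= new_lhs hbar Om S /\ new_lhs hbar Om S <= rs_lhs hbar Om S.
Proof.
  intros (Om_ge_0 & Om_derivable & Om'_derivable & Om''_continuous & S_derivable & Om_norm
    & Om_lim_m & Om_lim_p & Hq & Hq2 & HK & HP1 & HP2 & HQP).
  apply Iall_correct in Hq, Hq2, HK, HP1, HP2, HQP.
  set (mu := Iall (fun q => q * Om q ^ 2)) in *.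
  set (m2 := Iall (fun q => q ^ 2 * Om q ^ 2)) in *.
  set (K := Iall (fun q => Om q * Derive_n Om 2 q)) in *.
  set (P1 := Iall (fun q => Om q ^ 2 * Derive S q)) in *.
  set (P2 := Iall (fun q => Om q ^ 2 * Derive S q ^ 2)) in *.
  set (QP := Iall (fun q => q * Om q ^ 2 * Derive S q)) in *.
  assert (Hp2 : mean_p2 hbar Om S = - hbar ^ 2 * K + P2).
  { apply Iall_unique.
    apply (is_Iall_ext (fun q => - hbar ^ 2 * (Om q * Derive_n Om 2 q) + Om q ^ 2 * Derive S q ^ 2)
      _ (- hbar ^ 2 * K + P2)); [intros; ring | reflexivity |].
    apply is_Iall_plus; [apply is_Iall_scal, HK | exact HP2]. }
  assert (Hqq : is_Iall (fun q => q * q * Om q ^ 2) m2)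
    by (eapply (is_Iall_ext (fun q => q ^ 2 * Om q ^ 2)); [intros; ring | reflexivity | exact Hq2]).
  assert (HP1' : is_Iall (fun q => Derive S q * Om q ^ 2) P1)
    by (eapply (is_Iall_ext (fun q => Om q ^ 2 * Derive S q));
        [intros; ring | reflexivity | exact HP1]).
  assert (HP2' : is_Iall (fun q => Derive S q ^ 2 * Om q ^ 2) P2)
    by (eapply (is_Iall_ext (fun q => Om q ^ 2 * Derive S q ^ 2));
        [intros; ring | reflexivity | exact HP2]).
  assert (HQP' : is_Iall (fun q => q * Derive S q * Om q ^ 2) QP)
    by (eapply (is_Iall_ext (fun q => q * Om q ^ 2 * Derive S q));
        [intros; ring | reflexivity | exact HQP]).
  assert (Hspread : is_Iall (fun q => (q - mu) ^ 2 * Om q ^ 2) (m2 - mu ^ 2)).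
  { apply (is_Iall_ext (fun q => (q - mu) * (q - mu) * Om q ^ 2) _ (m2 - mu * mu));
      [intros; ring | ring |].
    apply (is_Iall_centered_product (fun q => Om q ^ 2) (fun q => q) (fun q => q));
      assumption. }
  pose proof (heisenberg_weyl Om mu 1 (m2 - mu ^ 2) K Om_derivable Om'_derivable Om''_continuous
    Om_lim_m Om_lim_p Om_norm Hspread HK) as HW.
  pose proof (covariance_cauchy_schwarz (fun q => Om q ^ 2) (fun q => q) (Derive S) mu P1 m2 P2 QP
    (fun q => pow2_ge_0 (Om q)) Om_norm Hq HP1' Hq2 HP2' HQP') as HCS.
  assert (Hhbar : 0 <= hbar ^ 2 * (- K * (m2 - mu ^ 2) - 1 / 4))
    by (apply Rmult_le_pos; [apply pow2_ge_0 | lra]).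
  unfold new_lhs, rs_lhs, var_p, var_q, cov_SS, cov_qp, mean_p, mean_q, mean_q2, mean_qp_sym.
  rewrite Hp2. fold mu m2 P1 P2 QP. split; nra.
Qed.

(** * Lorentzian integrals *)

Lemma filterlim_p_infty_of_inv (f g : R -> R) (l : R) :
  (forall x, 0 < x -> f x = g (/ x)) -> continuous g 0 -> g 0 = l ->
  filterlim f (Rbar_locally p_infty) (locally l).
Proof.
  intros Hfg Hg <-. change (is_lim f p_infty (g 0)).
  apply (is_lim_ext_loc (fun x => g (/ x))); [exists 0; intros x Hx; symmetry; apply Hfg, Hx |].
  apply (filterlim_comp _ _ _ (fun x => / x) g _ (locally 0)); [| exact Hg].
  exact (is_lim_inv (fun x => x) p_infty p_infty (is_lim_id p_infty) ltac:(discriminate)).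
Qed.

Lemma filterlim_m_infty_of_inv (f g : R -> R) (l : R) :
  (forall x, x < 0 -> f x = g (/ x)) -> continuous g 0 -> g 0 = l ->
  filterlim f (Rbar_locally m_infty) (locally l).
Proof.
  intros Hfg Hg <-. change (is_lim f m_infty (g 0)).
  apply (is_lim_ext_loc (fun x => g (/ x))); [exists 0; intros x Hx; symmetry; apply Hfg, Hx |].
  apply (filterlim_comp _ _ _ (fun x => / x) g _ (locally 0)); [| exact Hg].
  exact (is_lim_inv (fun x => x) m_infty m_infty (is_lim_id m_infty) ltac:(discriminate)).
Qed.

Lemma atan_lim_p : filterlim atan (Rbar_locally p_infty) (locally (PI / 2)).
Proof.
  apply (filterlim_p_infty_of_inv _ (fun y => PI / 2 - atan y)).
  - intros x Hx. rewrite atan_inv by exact Hx. ring.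
  - apply (continuous_minus (fun _ => PI / 2) atan);
      [apply continuous_const | apply continuous_atan].
  - rewrite atan_0. ring.
Qed.

Lemma atan_lim_m : filterlim atan (Rbar_locally m_infty) (locally (- (PI / 2))).
Proof.
  apply (filterlim_m_infty_of_inv _ (fun y => - (PI / 2) - atan y)).
  - intros x Hx. pose proof (atan_inv (- x) ltac:(lra)) as Hinv.
    rewrite Rinv_opp, !atan_opp in Hinv. lra.
  - apply (continuous_minus (fun _ => - (PI / 2)) atan);
      [apply continuous_const | apply continuous_atan].
  - rewrite atan_0. ring.
Qed.

Definition lorentzian (x : R) : R := / (1 + x ^ 2).

Lemma one_plus_sqr_pos (x : R) : 0 < 1 + x ^ 2.
Proof. pose proof (pow2_ge_0 x). lra. Qed.

Lemma sqr_mul_lorentzian (x : R) : x ^ 2 * lorentzian x = 1 - lorentzian x.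
Proof. unfold lorentzian. pose proof (one_plus_sqr_pos x). field. lra. Qed.

Lemma is_derive_lorentzian (x : R) : is_derive lorentzian x (-2 * x * lorentzian x ^ 2).
Proof.
  unfold lorentzian. pose proof (one_plus_sqr_pos x).
  auto_derive; [lra |]. field. lra.
Qed.

Lemma continuous_lorentzian (x : R) : continuous lorentzian x.
Proof. apply (ex_derive_continuous (V := R_NormedModule)). eexists. apply is_derive_lorentzian. Qed.

Lemma lorentzian_inv (x : R) : x <> 0 -> lorentzian x = (/ x) ^ 2 * lorentzian (/ x).
Proof.
  intros Hx. unfold lorentzian. pose proof (one_plus_sqr_pos x).
  field. repeat split; try exact Hx; lra.
Qed.

Lemma mul_lorentzian_inv (x : R) : x <> 0 -> x * lorentzian x = / x * lorentzian (/ x).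
Proof.
  intros Hx. unfold lorentzian. pose proof (one_plus_sqr_pos x).
  field. repeat split; try exact Hx; lra.
Qed.

Lemma lorentzian_pow_lim (c : R) (n : nat) :
  filterlim (fun x => c * lorentzian x ^ S n) (Rbar_locally m_infty) (locally 0) /\
  filterlim (fun x => c * lorentzian x ^ S n) (Rbar_locally p_infty) (locally 0).
Proof.
  set (g y := c * (y ^ 2 * lorentzian y) ^ S n).
  assert (Hfg : forall x, x <> 0 -> c * lorentzian x ^ S n = g (/ x))
    by (intros x Hx; unfold g; rewrite <- lorentzian_inv by exact Hx; reflexivity).
  assert (Hg : continuous g 0).
  { apply (ex_derive_continuous (V := R_NormedModule)). unfold g, lorentzian.
    auto_derive. pose proof (one_plus_sqr_pos 0). lra. }
  assert (Hg0 : g 0 = 0) by (unfold g; simpl; ring).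
  split; [apply (filterlim_m_infty_of_inv _ g) | apply (filterlim_p_infty_of_inv _ g)];
    try assumption; intros x Hx; apply Hfg; lra.
Qed.

Lemma mul_lorentzian_pow_lim (n : nat) :
  filterlim (fun x => x * lorentzian x ^ S n) (Rbar_locally m_infty) (locally 0) /\
  filterlim (fun x => x * lorentzian x ^ S n) (Rbar_locally p_infty) (locally 0).
Proof.
  set (g y := y * lorentzian y * (y ^ 2 * lorentzian y) ^ n).
  assert (Hfg : forall x, x <> 0 -> x * lorentzian x ^ S n = g (/ x)).
  { intros x Hx. unfold g. rewrite <- lorentzian_inv, <- mul_lorentzian_inv by exact Hx.
    simpl. ring. }
  assert (Hg : continuous g 0).
  { apply (ex_derive_continuous (V := R_NormedModule)). unfold g, lorentzian.
    auto_derive. pose proof (one_plus_sqr_pos 0). lra. }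
  assert (Hg0 : g 0 = 0) by (unfold g; ring).
  split; [apply (filterlim_m_infty_of_inv _ g) | apply (filterlim_p_infty_of_inv _ g)];
    try assumption; intros x Hx; apply Hfg; lra.
Qed.

Lemma is_Iall_lorentzian : is_Iall lorentzian PI.
Proof.
  apply (is_Iall_ext lorentzian _ (PI / 2 - - (PI / 2))); [reflexivity | lra |].
  apply (is_Iall_derive atan);
    [| apply continuous_lorentzian | apply atan_lim_m | apply atan_lim_p].
  intros x. unfold lorentzian. rewrite <- Rsqr_pow2. apply is_derive_atan.
Qed.

Lemma continuous_lorentzian_pow (n : nat) (x : R) : continuous (fun x => lorentzian x ^ n) x.
Proof.
  apply (ex_derive_continuous (V := R_NormedModule)).
  eexists. apply is_derive_pow, is_derive_lorentzian.
Qed.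

Lemma is_Iall_lorentzian_pow_succ (n : nat) (I : R) :
  is_Iall (fun x => lorentzian x ^ S n) I ->
  is_Iall (fun x => lorentzian x ^ S (S n)) ((2 * INR n + 1) / (2 * INR n + 2) * I).
Proof.
  intros HI. pose proof (pos_INR n) as Hn.
  set (F' x := (2 * INR n + 2) * lorentzian x ^ S (S n) - (2 * INR n + 1) * lorentzian x ^ S n).
  assert (HF' : is_Iall F' (0 - 0)).
  { destruct (mul_lorentzian_pow_lim n) as [Hm Hp].
    apply (is_Iall_derive (fun x => x * lorentzian x ^ S n)); [| | exact Hm | exact Hp].
    - intros x.
      replace (F' x)
        with (1 * lorentzian x ^ S n
              + x * (INR (S n) * (-2 * x * lorentzian x ^ 2) * lorentzian x ^ n)).
      + apply (is_derive_mult (fun x => x) (fun x => lorentzian x ^ S n));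
          [apply (is_derive_id (K := R_AbsRing)) | apply is_derive_pow, is_derive_lorentzian
          | intros; apply Rmult_comm].
      + apply Rminus_diag_uniq. unfold F'. rewrite S_INR.
        transitivity
          (- 2 * (INR n + 1) * lorentzian x ^ S n * (x ^ 2 * lorentzian x - (1 - lorentzian x)));
          [cbn [pow]; ring | rewrite sqr_mul_lorentzian; ring].
    - intros x. unfold F'.
      apply (continuous_minus (fun x => (2 * INR n + 2) * lorentzian x ^ S (S n))
        (fun x => (2 * INR n + 1) * lorentzian x ^ S n));
        [apply (continuous_scal_r (2 * INR n + 2) (fun x => lorentzian x ^ S (S n)))
        | apply (continuous_scal_r (2 * INR n + 1) (fun x => lorentzian x ^ S n))];
        apply continuous_lorentzian_pow. }
  apply (is_Iall_ext (fun x => / (2 * INR n + 2) * (F' x + (2 * INR n + 1) * lorentzian x ^ S n))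
    _ (/ (2 * INR n + 2) * ((0 - 0) + (2 * INR n + 1) * I))).
  - intros x. unfold F'. field. lra.
  - field. lra.
  - apply is_Iall_scal, is_Iall_plus; [exact HF' | apply is_Iall_scal, HI].
Qed.

Lemma is_Iall_mul_lorentzian_pow (n : nat) : is_Iall (fun x => x * lorentzian x ^ S (S n)) 0.
Proof.
  assert (Hn : 0 < INR (S n)) by apply lt_0_INR, Nat.lt_0_succ.
  set (c := - / (2 * INR (S n))).
  destruct (lorentzian_pow_lim c n) as [Hm Hp].
  apply (is_Iall_ext (fun x => x * lorentzian x ^ S (S n)) _ (0 - 0)); [reflexivity | ring |].
  apply (is_Iall_derive (fun x => c * lorentzian x ^ S n)); [| | exact Hm | exact Hp].
  - intros x. replace (x * lorentzian x ^ S (S n))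
      with (c * (INR (S n) * (-2 * x * lorentzian x ^ 2) * lorentzian x ^ n))
      by (unfold c; cbn [pow]; field; lra).
    apply is_derive_scal, is_derive_pow, is_derive_lorentzian.
  - intros x. apply (continuous_mult (fun x => x) (fun x => lorentzian x ^ S (S n)));
      [apply continuous_id | apply continuous_lorentzian_pow].
Qed.

Lemma is_Iall_lorentzian_sqr : is_Iall (fun x => lorentzian x ^ 2) (PI / 2).
Proof.
  apply (is_Iall_ext (fun x => lorentzian x ^ 2) _ ((2 * INR 0 + 1) / (2 * INR 0 + 2) * PI));
    [reflexivity | simpl; field |].
  apply (is_Iall_lorentzian_pow_succ 0).
  apply (is_Iall_ext lorentzian _ PI); [intros; ring | reflexivity | exact is_Iall_lorentzian].
Qed.

Lemma is_Iall_lorentzian_pow3 : is_Iall (fun x => lorentzian x ^ 3) (3 * PI / 8).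
Proof.
  apply (is_Iall_ext (fun x => lorentzian x ^ 3) _ ((2 * INR 1 + 1) / (2 * INR 1 + 2) * (PI / 2)));
    [reflexivity | simpl; field | exact (is_Iall_lorentzian_pow_succ 1 _ is_Iall_lorentzian_sqr)].
Qed.

Lemma is_Iall_lorentzian_pow4 : is_Iall (fun x => lorentzian x ^ 4) (5 * PI / 16).
Proof.
  apply (is_Iall_ext (fun x => lorentzian x ^ 4) _
    ((2 * INR 2 + 1) / (2 * INR 2 + 2) * (3 * PI / 8)));
    [reflexivity | simpl; field | exact (is_Iall_lorentzian_pow_succ 2 _ is_Iall_lorentzian_pow3)].
Qed.

(** * A Lorentzian state *)

Definition lorentzian_amplitude (q : R) : R := sqrt (2 / PI) * lorentzian q.

Lemma two_div_PI_ge_0 : 0 <= 2 / PI.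
Proof. apply Rlt_le, Rdiv_lt_0_compat; [lra | apply PI_RGT_0]. Qed.

Lemma lorentzian_amplitude_sqr (q : R) : lorentzian_amplitude q ^ 2 = 2 / PI * lorentzian q ^ 2.
Proof.
  unfold lorentzian_amplitude. rewrite Rpow_mult_distr, pow2_sqrt by exact two_div_PI_ge_0.
  reflexivity.
Qed.

Lemma is_derive_lorentzian_amplitude (q : R) :
  is_derive lorentzian_amplitude q (sqrt (2 / PI) * (-2 * q * lorentzian q ^ 2)).
Proof. apply is_derive_scal, is_derive_lorentzian. Qed.

Lemma is_derive2_lorentzian_amplitude (q : R) :
  is_derive (Derive lorentzian_amplitude) q
    (sqrt (2 / PI) * (6 * lorentzian q ^ 2 - 8 * lorentzian q ^ 3)).
Proof.
  apply (is_derive_ext (fun q => sqrt (2 / PI) * (-2 * q * lorentzian q ^ 2))).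
  { intros x. symmetry. apply is_derive_unique, is_derive_lorentzian_amplitude. }
  apply is_derive_scal. unfold lorentzian. pose proof (one_plus_sqr_pos q).
  auto_derive; [lra |]. field. lra.
Qed.

Lemma Derive_atan (q : R) : Derive atan q = lorentzian q.
Proof. apply is_derive_unique. unfold lorentzian. rewrite <- Rsqr_pow2. apply is_derive_atan. Qed.

Lemma lorentzian_state_moments :
  is_Iall (fun q => lorentzian_amplitude q ^ 2) 1 /\
  is_Iall (fun q => q * lorentzian_amplitude q ^ 2) 0 /\
  is_Iall (fun q => q ^ 2 * lorentzian_amplitude q ^ 2) 1 /\
  is_Iall (fun q => lorentzian_amplitude q * Derive_n lorentzian_amplitude 2 q) (- 1 / 2) /\
  is_Iall (fun q => lorentzian_amplitude q ^ 2 * Derive atan q) (3 / 4) /\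
  is_Iall (fun q => lorentzian_amplitude q ^ 2 * Derive atan q ^ 2) (5 / 8) /\
  is_Iall (fun q => q * lorentzian_amplitude q ^ 2 * Derive atan q) 0.
Proof.
  pose proof PI_RGT_0 as HPI.
  repeat split.
  - apply (is_Iall_ext (fun q => 2 / PI * lorentzian q ^ 2) _ (2 / PI * (PI / 2)));
      [intros; symmetry; apply lorentzian_amplitude_sqr | field; lra |].
    apply is_Iall_scal, is_Iall_lorentzian_sqr.
  - apply (is_Iall_ext (fun q => 2 / PI * (q * lorentzian q ^ 2)) _ (2 / PI * 0));
      [intros; rewrite lorentzian_amplitude_sqr; ring | ring |].
    apply is_Iall_scal, (is_Iall_mul_lorentzian_pow 0).
  - apply (is_Iall_ext (fun q => 2 / PI * (lorentzian q - lorentzian q ^ 2)) _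
      (2 / PI * (PI - PI / 2))); [| field; lra |].
    + intros q. rewrite lorentzian_amplitude_sqr.
      replace (q ^ 2 * (2 / PI * lorentzian q ^ 2))
        with (2 / PI * (q ^ 2 * lorentzian q * lorentzian q)) by ring.
      rewrite sqr_mul_lorentzian. ring.
    + apply is_Iall_scal, is_Iall_minus; [exact is_Iall_lorentzian | exact is_Iall_lorentzian_sqr].
  - apply (is_Iall_ext (fun q => 2 / PI * (6 * lorentzian q ^ 3 - 8 * lorentzian q ^ 4))
      _ (2 / PI * (6 * (3 * PI / 8) - 8 * (5 * PI / 16)))); [| field; lra |].
    + intros q.
      change (Derive_n lorentzian_amplitude 2 q) with (Derive (Derive lorentzian_amplitude) q).
      rewrite (is_derive_unique _ _ _ (is_derive2_lorentzian_amplitude q)).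
      unfold lorentzian_amplitude.
      transitivity (sqrt (2 / PI) * sqrt (2 / PI) * (6 * lorentzian q ^ 3 - 8 * lorentzian q ^ 4));
        [rewrite sqrt_sqrt by exact two_div_PI_ge_0; reflexivity | ring].
    + apply is_Iall_scal, is_Iall_minus; apply is_Iall_scal;
        [exact is_Iall_lorentzian_pow3 | exact is_Iall_lorentzian_pow4].
  - apply (is_Iall_ext (fun q => 2 / PI * lorentzian q ^ 3) _ (2 / PI * (3 * PI / 8)));
      [intros; rewrite lorentzian_amplitude_sqr, Derive_atan; ring | field; lra |].
    apply is_Iall_scal, is_Iall_lorentzian_pow3.
  - apply (is_Iall_ext (fun q => 2 / PI * lorentzian q ^ 4) _ (2 / PI * (5 * PI / 16)));
      [intros; rewrite lorentzian_amplitude_sqr, Derive_atan; ring | field; lra |].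
    apply is_Iall_scal, is_Iall_lorentzian_pow4.
  - apply (is_Iall_ext (fun q => 2 / PI * (q * lorentzian q ^ 3)) _ (2 / PI * 0));
      [intros; rewrite lorentzian_amplitude_sqr, Derive_atan; ring | ring |].
    apply is_Iall_scal, (is_Iall_mul_lorentzian_pow 1).
Qed.

Lemma admissible_lorentzian_state : admissible lorentzian_amplitude atan.
Proof.
  destruct lorentzian_state_moments as (Hnorm & Hq & Hq2 & HK & HP1 & HP2 & HQP).
  destruct (lorentzian_pow_lim (sqrt (2 / PI)) 0) as [Hlim_m Hlim_p].
  assert (Hext : forall q, sqrt (2 / PI) * lorentzian q ^ 1 = lorentzian_amplitude q)
    by (intros; unfold lorentzian_amplitude; ring).
  unfold admissible, ex_Iall. repeat split.
  - intros q. apply Rmult_le_pos; [apply sqrt_pos |].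
    apply Rlt_le, Rinv_0_lt_compat, one_plus_sqr_pos.
  - intros q. eexists. apply is_derive_lorentzian_amplitude.
  - intros q. eexists. apply is_derive2_lorentzian_amplitude.
  - intros q.
    apply (continuous_ext (fun q => sqrt (2 / PI) * (6 * lorentzian q ^ 2 - 8 * lorentzian q ^ 3))).
    { intros x. symmetry. apply is_derive_unique, is_derive2_lorentzian_amplitude. }
    apply (continuous_scal_r (sqrt (2 / PI))
      (fun q => 6 * lorentzian q ^ 2 - 8 * lorentzian q ^ 3)).
    apply (continuous_minus (fun q => 6 * lorentzian q ^ 2) (fun q => 8 * lorentzian q ^ 3));
      [apply (continuous_scal_r 6 (fun q => lorentzian q ^ 2))
      | apply (continuous_scal_r 8 (fun q => lorentzian q ^ 3))]; apply continuous_lorentzian_pow.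
  - intros q. eexists. apply is_derive_atan.
  - exact Hnorm.
  - exact (filterlim_ext _ _ Hext Hlim_m).
  - exact (filterlim_ext _ _ Hext Hlim_p).
  - eexists; exact Hq.
  - eexists; exact Hq2.
  - eexists; exact HK.
  - eexists; exact HP1.
  - eexists; exact HP2.
  - eexists; exact HQP.
Qed.

Lemma lorentzian_state_strict (hbar : R) :
  new_lhs hbar lorentzian_amplitude atan < rs_lhs hbar lorentzian_amplitude atan.
Proof.
  destruct lorentzian_state_moments as (_ & Hq & Hq2 & _ & HP1 & HP2 & HQP).
  (* Var q = 1, Cov(q, p) = 0 and Cov(S', S') = 5/8 - (3/4)^2 = 1/16. *)
  unfold new_lhs, rs_lhs, var_q, cov_SS, cov_qp, mean_q, mean_q2, mean_p, mean_qp_sym.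
  rewrite (Iall_unique _ _ Hq), (Iall_unique _ _ Hq2), (Iall_unique _ _ HP1), (Iall_unique _ _ HP2),
    (Iall_unique _ _ HQP).
  lra.
Qed.

Theorem theorem4 (hbar : R) (hhbar : 0 < hbar) :
  (forall Om S : R -> R, admissible Om S ->
     0 <= new_lhs hbar Om S /\ new_lhs hbar Om S <= rs_lhs hbar Om S) /\
  (exists Om S : R -> R, admissible Om S /\
     new_lhs hbar Om S < rs_lhs hbar Om S).
Proof.
  split.
  - apply uncertainty_relations.
  - exists lorentzian_amplitude, atan.
    split; [exact admissible_lorentzian_state | apply lorentzian_state_strict].
Qed.
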